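(* Let $G$ be a very well-covered graph with $V(G)=\{x_1,\ldots,x_h,y_1,\ldots,y_h\}$ such that $\{x_1,\ldots,x_h\}$ is a minimal vertex cover, $\{y_1,\ldots,y_h\}$ a maximal independent set and $\{x_i,y_i\}\in E(G)$ for all $i$. Let $s\ge1$, $e_1,\ldots,e_s\in E(G)$, and let $G'$ be the graph associated to $(I(G)^{s+1}:e_1\cdots e_s)$ as in the context. Let $u\in V(G)$ with $u^2\in(I(G)^{s+1}:e_1\cdots e_s)$. If $a\in N_{G'}([u]\setminus u)\cap V(G)$ and $b\in N_G[[u]]$, then $\{a,b\}\in E(G')$.
   Context: For $u\in\{x_i,y_i\}$, $[u]=\{x_i,y_i\}$, $[u]\setminus u$ denotes the other element of $[u]$, and $N_G[[u]]=N_G[x_i,y_i]$ is the closed neighbourhood $\{x_i,y_i\}\cup\{v\mid v$ adjacent in $G$ to $x_i$ or $y_i\}$; $N_{G'}(w)$ is the open neighbourhood of $w$ in $G'$. $I(G)$ is the edge ideal; edges are identified with the products of their endpoints. $G$ is very well-covered if it has no isolated vertices, all minimal vertex covers have the same size, and this size is $|V(G)|/2$. Even-connection: a sequence $p_0p_1\cdots p_{2k+1}$, $k\ge1$, with $\{p_r,p_{r+1}\}\in E(G)$ for all $r$, each $\{p_{2\ell+1},p_{2\ell+2}\}$ ($0\le\ell\le k-1$) equal to some $e_m$, each edge used among these at most as many times as it appears in $e_1,\dots,e_s$; then $p_0,p_{2k+1}$ (possibly equal) are even-connected. $(I(G)^{s+1}:e_1\cdots e_s)$ is minimally generated by $uv$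 with $\{u,v\}\in E(G)$ or $u,v$ even-connected; $G'$ is the graph whose edge ideal is the polarization of this ideal (each generator $u^2$ replaced by $uu^*$ with a new vertex $u^*$), so for $u\ne v\in V(G)$, $\{u,v\}\in E(G')$ iff $\{u,v\}\in E(G)$ or $u,v$ are even-connected. *)

From mathcomp Require Import all_boot.
Set Implicit Arguments. Unset Strict Implicit. Unset Printing Implicit Defensive.

Definition simple_graph (T : finType) (G : rel T) : Prop :=
  symmetric G /\ irreflexive G.

Definition vertex_cover (T : finType) (G : rel T) (C : {set T}) : Prop :=
  forall u v, G u v -> (u \in C) || (v \in C).

Definition minimal_vertex_cover (T : finType) (G : rel T) (C : {set T}) : Prop :=
  vertex_cover G C /\ forall D : {set T}, D \proper C -> ~ vertex_cover G D.

Definition independent_set (T : finType) (G : rel T) (S : {set T}) : Prop :=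
  forall u v, u \in S -> v \in S -> ~~ G u v.

Definition maximal_independent_set (T : finType) (G : rel T) (S : {set T}) : Prop :=
  independent_set G S /\ forall S' : {set T}, S \proper S' -> ~ independent_set G S'.

Definition very_well_covered (T : finType) (G : rel T) : Prop :=
  (forall v, exists w, G v w) /\
  (forall C : {set T}, minimal_vertex_cover G C -> (#|C|).*2 = #|T|).

Definition uedge (T : finType) (e : T * T) : {set T} := [set e.1; e.2].

Definition even_connected (T : finType) (G : rel T) (es : seq (T * T)) (u v : T) : Prop :=
  exists (k : nat) (p : nat -> T),
    [/\ 1 <= k, p 0 = u /\ p (2 * k + 1) = v,
        (forall r, r < 2 * k + 1 -> G (p r) (p r.+1)),
        (forall l, l < k -> [set p (2 * l + 1); p (2 * l + 2)] \in map (@uedge T) es) &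
        (forall S : {set T},
           count (fun l => [set p (2 * l + 1); p (2 * l + 2)] == S) (iota 0 k)
           <= count_mem S (map (@uedge T) es))].

(* uv is one of the minimal generators of (I(G)^{s+1} : e_1 ... e_s):
   {u,v} is an edge of G, or u and v are even-connected. For u = v this says
   u^2 lies in the colon ideal (equivalently {u, u*} is an edge of G'). *)
Definition colon_gen (T : finType) (G : rel T) (es : seq (T * T)) (u v : T) : Prop :=
  G u v \/ even_connected G es u v.

(* Edges of G' between two (distinct) original vertices of G. *)
Definition Gp_edge (T : finType) (G : rel T) (es : seq (T * T)) (u v : T) : Prop :=
  u != v /\ colon_gen G es u v.

(* Every neighbour of y_i is adjacent to every neighbour of x_i: otherwise a
   maximal independent set through two non-adjacent such neighbours contains
   at most one end of each edge x_j y_j and neither x_i nor y_i, hence fewer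
   than h vertices, while its complement, a minimal vertex cover, has
   |V(G)|/2 = h vertices.
   Let c be the vertex preceding w on the walk from a to w (c = a when aw is an
   edge of G), and r the walk from u back to u.  If b = w or b is a neighbour of u, then c is
   adjacent to b and the first walk suffices.  Otherwise every neighbour of u,
   in particular each end of r, is adjacent to b and to c, and we go from a to
   c and then along r.  Should this use some e_m too often, cut at the first
   step of the first walk whose edge recurs on r and continue along r from that
   occurrence, forwards or backwards according to its orientation: every edge
   is then used at most as often as in one of the two walks. *)

From mathcomp Require Import all_boot zify.
Set Implicit Arguments. Unset Strict Implicit. Unset Printing Implicit Defensive.

Section IndependentSets.

Variables (T : finType) (G : rel T).
Hypothesis Gsym : symmetric G.
Implicit Types I : {set T}.

Lemma independent_setP I :
  reflect (independent_set G I) [forall u in I, forall v in I, ~~ G u v].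
Proof.
apply: (iffP forall_inP) => [indI u v uI | indI u uI].
  exact: (forall_inP (indI u uI)).
by apply/forall_inP => v; apply: indI.
Qed.

Lemma independent_set_extend I :
  independent_set G I -> exists2 J : {set T}, I \subset J & maximal_independent_set G J.
Proof.
move=> /independent_setP indI.
pose P := [pred A : {set T} | [forall u in A, forall v in A, ~~ G u v] && (I \subset A)].
have PI : P I by rewrite /= indI subxx.
have [J maxJ IJ] := maxset_exists PI.
have [/andP[/independent_setP indJ _] maxP] := maxsetP maxJ.
exists J => //; split=> // K ltJK indK.
have eKJ : K = J.
  apply: maxP (proper_sub ltJK).
  by rewrite /= (subset_trans IJ (proper_sub ltJK)) andbT; apply/independent_setP.
by rewrite eKJ properxx in ltJK.
Qed.

Lemma minimal_vertex_cover_setC I :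
  maximal_independent_set G I -> minimal_vertex_cover G (~: I).
Proof.
move=> [indI maxI]; split=> [u v Guv | D /properP [DI [v vI vD]] coverD].
  by rewrite !inE -negb_and; apply: contraTN Guv => /andP[uI vI]; apply: indI.
have GvD w : G v w -> w \in D by move/coverD; rewrite (negbTE vD).
have nGv w : w \in v |: I -> ~~ G v w.
  move=> wvI; apply/negP => /GvD wD; move: wvI; rewrite !inE => /orP[/eqP ew | wI].
    by move: vD; rewrite -ew wD.
  by move: (subsetP DI _ wD); rewrite inE wI.
apply: (maxI (v |: I)); first by apply: properUr; rewrite sub1set -in_setC.
move=> u w /setU1P[-> | uI]; first exact: nGv.
case/setU1P=> [-> | wI]; last exact: indI.
by rewrite Gsym; apply: nGv; rewrite setU1r.
Qed.

Lemma card_maximal_independent I :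
  very_well_covered G -> maximal_independent_set G I -> (#|I|).*2 = #|T|.
Proof.
move=> [_ vwc] /minimal_vertex_cover_setC /vwc; rewrite -(cardsC I) -!mul2n; lia.
Qed.

Variables (h : nat) (x y : 'I_h -> T).
Hypothesis cover : forall v, exists j, v = x j \/ v = y j.
Hypothesis Gxy : forall j, G (x j) (y j).

Lemma card_independent_avoiding_pair I i :
  independent_set G I -> x i \notin I -> y i \notin I -> #|I| < h.
Proof.
move=> indI xiI yiI.
pose pair_of v := odflt i [pick j | (v == x j) || (v == y j)].
have pair_ofP v : v = x (pair_of v) \/ v = y (pair_of v).
  rewrite /pair_of; case: pickP => [j /orP[] /eqP | none]; [by left | by right |].
  by have [j [e | e]] := cover v; move: (none j); rewrite e eqxx ?orbT.
have inj_pair_of : {in I &, injective pair_of}.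
  move=> u w uI wI e; have := indI u w uI wI; have := indI w u wI uI.
  by case: (pair_ofP u) (pair_ofP w) => -> [] ->; rewrite e ?Gxy.
have sub_pair_of : pair_of @: I \subset [set~ i].
  apply/subsetP => _ /imsetP[w wI ->]; rewrite !inE; apply: contraNneq xiI => e.
  by case: (pair_ofP w) wI => -> wI; [ | move: yiI]; rewrite -e ?wI.
have := subset_leq_card sub_pair_of; rewrite card_in_imset // cardsC1 card_ord.
by have := ltn_ord i; lia.
Qed.

Lemma very_well_covered_neighbors_adjacent i v z :
  irreflexive G -> very_well_covered G -> injective x ->
  minimal_vertex_cover G [set x j | j in 'I_h] ->
  independent_set G [set y j | j in 'I_h] ->
  G (y i) v -> G (x i) z -> G v z.
Proof.
move=> Girr vwc xinj coverX indY Gyv Gxz.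
have [m [ev | ev]] := cover v; subst v; last first.
  have yin j : y j \in [set y j | j in 'I_h] by apply: imset_f.
  by move: (indY _ _ (yin i) (yin m)); rewrite Gyv.
apply: contraT => nGxz.
have ind0 : independent_set G [set z; x m].
  move=> u w /set2P[] -> /set2P[] ->; rewrite ?Girr // Gsym //.
have [I sub0I maxI] := independent_set_extend ind0.
have indI := proj1 maxI.
have zI : z \in I by rewrite (subsetP sub0I) ?set21.
have xmI : x m \in I by rewrite (subsetP sub0I) ?set22.
have xiI : x i \notin I by apply: contraL Gxz => xiI; apply: indI.
have yiI : y i \notin I by apply: contraL Gyv => yiI; apply: indI.
have cardT : #|T| = h.*2 by rewrite -(proj2 vwc _ coverX) card_imset // card_ord.
have := card_independent_avoiding_pair indI xiI yiI.
by rewrite -(@ltn_double _ h) card_maximal_independent // cardT ltnn.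
Qed.

End IndependentSets.

Section PairWalks.

Variable T : finType.
Implicit Types (f g : T * T) (s r : seq (T * T)) (X : {set T}).

Definition flip f : T * T := (f.2, f.1).

Definition flatten_pairs s : seq T := flatten [seq [:: f.1; f.2] | f <- s].

Definition edge_count s X : nat := count_mem X (map (@uedge T) s).

Arguments flatten_pairs : simpl never.

Lemma flatten_pairs_cons f s : flatten_pairs (f :: s) = f.1 :: f.2 :: flatten_pairs s.
Proof. by []. Qed.

Lemma flatten_pairs_cat s r :
  flatten_pairs (s ++ r) = flatten_pairs s ++ flatten_pairs r.
Proof. by rewrite /flatten_pairs map_cat flatten_cat. Qed.

Lemma flatten_pairs_rev_flip s :
  flatten_pairs (rev (map flip s)) = rev (flatten_pairs s).
Proof.
elim: s => //= f s IHs.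
by rewrite rev_cons -cats1 flatten_pairs_cat IHs !rev_cons -!cats1 -catA.
Qed.

Lemma size_flatten_pairs s : size (flatten_pairs s) = 2 * size s.
Proof. by elim: s => //= f s ->; rewrite mulnS. Qed.

Lemma last_flatten_pairs x f s : last x (flatten_pairs (f :: s)) = (last f s).2.
Proof. by elim: s f => //= g s IHs f; rewrite -IHs. Qed.

Lemma flatten_pairs_inj : injective flatten_pairs.
Proof.
elim=> [|[f1 f2] s IHs] [|[g1 g2] r] //= [-> -> /IHs ->] //.
Qed.

Lemma uedge_flip f : uedge (flip f) = uedge f.
Proof. exact: setUC. Qed.

Lemma eq_uedge f g : uedge g = uedge f -> g = f \/ g = flip f.
Proof.
case: f g => [f1 f2] [g1 g2] E; rewrite /flip /=.
have mem z : (z \in uedge (g1, g2)) = (z \in uedge (f1, f2)) by rewrite E.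
move: (mem g1) (mem g2) (mem f1) (mem f2); rewrite !inE !eqxx ?orbT /=.
by move=> /esym/orP[]/eqP-> /esym/orP[]/eqP-> /orP[]/eqP e1 /orP[]/eqP e2; subst; auto.
Qed.

Lemma edge_count_cons f s X :
  edge_count (f :: s) X = (uedge f == X) + edge_count s X.
Proof. by []. Qed.

Lemma edge_count_cat s r X : edge_count (s ++ r) X = edge_count s X + edge_count r X.
Proof. by rewrite /edge_count map_cat count_cat. Qed.

Lemma edge_count_rev_flip s X : edge_count (rev (map flip s)) X = edge_count s X.
Proof.
by rewrite /edge_count map_rev count_rev -map_comp (eq_map uedge_flip).
Qed.

Definition edges_within s r : Prop := forall X, edge_count s X <= edge_count r X.

(* The even-connection p_0 p_1 ... p_(2k+1) is encoded by the list of its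
   steps (p_(2l+1), p_(2l+2)), whose [flatten_pairs] is p_1 ... p_(2k). *)
Definition walk_pairs (p : nat -> T) k : seq (T * T) :=
  [seq (p (2 * l + 1), p (2 * l + 2)) | l <- iota 0 k].

Lemma flatten_walk_pairs p k :
  flatten_pairs (walk_pairs p k) = [seq p j | j <- iota 1 (2 * k)].
Proof.
elim: k => // k IHk.
rewrite /walk_pairs -[k.+1]addn1 iotaD map_cat flatten_pairs_cat -/(walk_pairs p k) IHk.
by rewrite mulnDr muln1 iotaD map_cat /= add1n addn1 addn2.
Qed.

Variable G : rel T.

Lemma path_iotaP (p : nat -> T) n :
  (forall j, j < n -> G (p j) (p j.+1)) <-> path G (p 0) [seq p j | j <- iota 1 n].
Proof.
have nthE j : j < n -> nth (p 0) [seq p j | j <- iota 1 n] j = p j.+1.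
  by move=> lt_jn; rewrite (nth_map 0) ?size_iota // nth_iota // add1n.
have nthE' j : j < n -> nth (p 0) (p 0 :: [seq p j | j <- iota 1 n]) j = p j.
  by case: j => //= j lt_jn; rewrite nthE // ltnW.
split=> [adj | /(pathP (p 0)) P j lt_jn].
  by apply/(pathP (p 0)) => j; rewrite size_map size_iota => lt_jn; rewrite nthE' ?nthE ?adj.
by have := P j; rewrite size_map size_iota nthE' ?nthE //; apply.
Qed.

Lemma even_connectedP es a b :
  even_connected G es a b <->
  exists s, [/\ s != [::], path G a (flatten_pairs s ++ [:: b]) & edges_within s es].
Proof.
have walk_seq p k : flatten_pairs (walk_pairs p k) ++ [:: p (2 * k + 1)] =
                    [seq p j | j <- iota 1 (2 * k + 1)].
  by rewrite flatten_walk_pairs iotaD map_cat add1n addn1.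
split.
  case=> k [p [k_gt0 [<- <-] /path_iotaP adj _ cnt]].
  exists (walk_pairs p k); split; rewrite ?walk_seq //.
    by rewrite -size_eq0 size_map size_iota -lt0n.
  by move=> X; rewrite /edge_count -map_comp count_map; apply: cnt.
case=> s [s_nil Ps Ws].
pose p := nth a (a :: flatten_pairs s ++ [:: b]).
have Ep : flatten_pairs s ++ [:: b] = [seq p j | j <- iota 1 (2 * size s + 1)].
  by rewrite -[LHS]/(behead (a :: _)) -[a :: _](mkseq_nth a) /= size_cat size_flatten_pairs.
have [Es Eb] : walk_pairs p (size s) = s /\ p (2 * size s + 1) = b.
  by move: Ep; rewrite -walk_seq !cats1 => /rcons_inj [/flatten_pairs_inj].
exists (size s), p; split => //.
- by rewrite lt0n size_eq0.
- by apply/path_iotaP; rewrite -Ep.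
- move=> l lt_ls; have : uedge (p (2 * l + 1), p (2 * l + 2)) \in map (@uedge T) s.
    by rewrite -Es; do 2!apply: map_f; rewrite mem_iota.
  by rewrite -!has_pred1 !has_count => /leq_trans; apply; apply: Ws.
- by move=> X; have := Ws X; rewrite -[in X in X -> _]Es /edge_count -map_comp count_map.
Qed.

Lemma colon_genP es a b :
  colon_gen G es a b <->
  exists s, path G a (flatten_pairs s ++ [:: b]) /\ edges_within s es.
Proof.
split=> [[Gab | /even_connectedP[s [_ Ps Ws]]] | [[|f s] [Ps Ws]]].
- by exists [::]; split=> [|X]; rewrite /= ?Gab.
- by exists s.
- by left; case/andP: Ps.
- by right; apply/even_connectedP; exists (f :: s).
Qed.

Hypothesis Gsym : symmetric G.

Lemma path_rcons_rev x p y : path G x (rcons p y) -> path G y (rev p).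
Proof.
have Gsym' : (fun z => G^~ z) =2 G by move=> z t; rewrite /= Gsym.
rewrite -(eq_path Gsym') -rev_path last_rcons belast_rcons rev_cons.
by rewrite rcons_path => /andP[].
Qed.

Lemma splice_walks a s g r :
  path G a (flatten_pairs (s ++ g :: r)) ->
  exists t, [/\ path G a (flatten_pairs t),
    last a (flatten_pairs t) \in [:: g.1; (last g r).2] &
    forall X, edge_count t X <= maxn (edge_count s X) (edge_count (g :: r) X)].
Proof.
elim: s a => [|f s IHs] a.
  move=> Pr; exists (g :: r); split => //.
    by rewrite last_flatten_pairs !inE eqxx orbT.
  by move=> X; rewrite leq_maxr.
rewrite cat_cons flatten_pairs_cons /= => /and3P[Gaf Gf Psr].
have [|fr] := boolP (uedge f \in map (@uedge T) (g :: r)); last first.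
  have [t [Pt Et Ct]] := IHs _ Psr.
  exists (f :: t); split; rewrite ?flatten_pairs_cons /= ?Gaf ?Gf //.
  move=> X; have := Ct X; rewrite !(edge_count_cons f).
  case: eqP => [<- | _]; last by rewrite !add0n.
  have -> : edge_count (g :: r) (uedge f) = 0 by exact/count_memPn.
  by rewrite maxn0 !add1n ltnS.
case/mapP=> f' f'r /esym /eq_uedge ef'.
case/splitPr E: _ / f'r => [A B].
move: Psr; rewrite E !flatten_pairs_cat cat_path => /andP[_].
have Egr : (last g r).2 = (last f' B).2.
  by rewrite -(last_flatten_pairs a) E flatten_pairs_cat last_cat last_flatten_pairs.
case: ef' => ->{f'} in E Egr *.
- rewrite cat_path flatten_pairs_cons => /andP[_ /and3P[_ _ PB]].
  exists (f :: B); split.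
  + by rewrite flatten_pairs_cons /= Gaf Gf.
  + by rewrite Egr last_flatten_pairs !inE eqxx orbT.
  + by move=> X; rewrite edge_count_cat; apply: leq_trans _ (leq_maxr _ _); rewrite leq_addl.
- rewrite flatten_pairs_cons -cat_rcons cat_path => /andP[/path_rcons_rev PA _].
  exists (f :: rev (map flip A)); split.
  + by rewrite flatten_pairs_cons flatten_pairs_rev_flip /= Gaf Gf.
  + rewrite flatten_pairs_cons flatten_pairs_rev_flip /= inE.
    by case: A E {PA} => [|h A] [-> _]; rewrite ?flatten_pairs_cons ?rev_cons ?last_rcons eqxx.
  + move=> X; rewrite edge_count_cat !edge_count_cons edge_count_rev_flip uedge_flip.
    by apply: leq_trans _ (leq_maxr _ _); rewrite addnCA leq_add2l leq_addr.
Qed.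

Hypothesis Girr : irreflexive G.

Lemma colon_gen_detour es p a s b :
  colon_gen G es p p -> path G a (flatten_pairs s) -> edges_within s es ->
  (forall v, G p v -> G (last a (flatten_pairs s)) v) -> (forall v, G p v -> G b v) ->
  colon_gen G es a b.
Proof.
move=> /colon_genP[[|g r] [Pr Wr]] Ps Ws p_s p_b.
  by move: Pr => /andP[]; rewrite Girr.
move: Pr; rewrite cat_path flatten_pairs_cons last_flatten_pairs /= andbT.
move=> /andP[/and3P[Gpg Gg Pr] Grp].
have Psr : path G a (flatten_pairs (s ++ g :: r)).
  by rewrite flatten_pairs_cat cat_path Ps flatten_pairs_cons /= Gg Pr !andbT; apply: p_s.
have [t [Pt Et Wt]] := splice_walks Psr.
apply/colon_genP; exists t; split.
  rewrite cats1 rcons_path Pt /= Gsym; apply: p_b.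
  by case/predU1P: Et => [-> | /predU1P[-> | //]]; rewrite // Gsym.
by move=> X; apply: leq_trans (Wt X) _; rewrite geq_max Ws Wr.
Qed.

Lemma colon_gen_closed_nbhd es p q a b :
  (forall v z, G p v -> G q z -> G v z) ->
  colon_gen G es p p -> colon_gen G es a q ->
  b = p \/ b = q \/ G p b \/ G q b -> colon_gen G es a b.
Proof.
move=> join Gpp /colon_genP[s [Ps Ws]] Hb.
move: Ps; rewrite cats1 rcons_path => /andP[Ps Gsq].
have p_s v : G p v -> G (last a (flatten_pairs s)) v.
  by move=> Gpv; rewrite Gsym (join _ _ Gpv) // Gsym.
have via_s d : G (last a (flatten_pairs s)) d -> colon_gen G es a d.
  by move=> Gsb; apply/colon_genP; exists s; rewrite cats1 rcons_path Ps Gsb.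
case: Hb => [-> | [-> | [Gpb | Gqb]]].
- exact: colon_gen_detour Gpp Ps Ws p_s _.
- exact: via_s Gsq.
- by apply: via_s; rewrite Gsym (join _ _ Gpb) // Gsym.
- by apply: colon_gen_detour Gpp Ps Ws p_s _ => v Gpv; rewrite Gsym (join _ _ Gpv).
Qed.

End PairWalks.

Theorem lemma4p4 (T : finType) (G : rel T) (h : nat) (x y : 'I_h -> T)
  (es : seq (T * T)) (u w a b : T) (i : 'I_h) :
  simple_graph G ->
  very_well_covered G ->
  injective x -> injective y -> (forall j l, x j != y l) ->
  (forall v : T, exists j, v = x j \/ v = y j) ->
  minimal_vertex_cover G [set x j | j in 'I_h] ->
  maximal_independent_set G [set y j | j in 'I_h] ->
  (forall j, G (x j) (y j)) ->
  (* e_1, ..., e_s with s >= 1, all edges of G *)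
  0 < size es -> (forall e, e \in es -> G e.1 e.2) ->
  (* u is a vertex of [u] = {x_i, y_i} and w = [u] \ u *)
  ((u = x i /\ w = y i) \/ (u = y i /\ w = x i)) ->
  (* u^2 lies in (I(G)^{s+1} : e_1 ... e_s) *)
  colon_gen G es u u ->
  (* a in N_{G'}([u] \ u) \cap V(G) *)
  Gp_edge G es a w ->
  (* b in N_G[[u]] = N_G[x_i, y_i] *)
  (b = x i \/ b = y i \/ G (x i) b \/ G (y i) b) ->
  (* {a,b} in E(G'), i.e. ab is a generator of the colon ideal *)
  colon_gen G es a b.
Proof.
move=> [Gsym Girr] vwc xinj _ _ cover coverX [indY _] Gxy _ _ Hu Huu [_ Haw] Hb.
have join v z : G (y i) v -> G (x i) z -> G v z.
  exact: (very_well_covered_neighbors_adjacent Gsym cover Gxy Girr vwc xinj coverX indY).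
case: Hu Huu Haw => [] [-> ->] Huu Haw; apply: (colon_gen_closed_nbhd Gsym Girr) Huu Haw _ => //.
- by move=> v z Gxv Gyz; rewrite Gsym join.
- by case: Hb => [-> | [-> | [Gb | Gb]]]; auto.
Qed.
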